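(* Let $p,q>1$ and $t>2$, and let $u,v$ be weights on $\mathbb{R}$. Suppose that for every interval $I=(a,b)$, with $l_{I}=b-a$, \[ \left(\frac{1}{l_{I}/t}\int_{a}^{a+\frac{l_{I}}{t}}v^{q}\right)^{\frac{1}{q}}\left(\frac{1}{l_{I}/t}\int_{b-\frac{l_{I}}{t}}^{b}u^{-p'}\right)^{\frac{1}{p'}}\leq K. \] Then \[ \sup_{a<b<c}\left(\frac{v^{q}(a,b)}{c-a}\right)^{\frac{1}{q}}\left(\frac{u^{-p'}(b,c)}{c-a}\right)^{\frac{1}{p'}}\leq K. \]
   Context: A weight is a non-negative locally integrable function on $\mathbb{R}$. For a weight $\sigma$ and an interval $(a,b)$, $\sigma(a,b)=\int_{a}^{b}\sigma$; in particular $v^{q}(a,b)=\int_a^b v^q$ and $u^{-p'}(b,c)=\int_b^c u^{-p'}$. Here $p'=p/(p-1)$. *)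

From HB Require Import structures.
From mathcomp Require Import all_boot all_order all_algebra.
From mathcomp Require Import all_classical all_reals all_analysis.
Set Implicit Arguments. Unset Strict Implicit. Unset Printing Implicit Defensive.
Import Order.TTheory GRing.Theory Num.Theory.
Local Open Scope classical_set_scope.
Local Open Scope ring_scope.

Definition weight {R : realType} (w : R -> R) : Prop :=
  (forall x, 0 <= w x) /\
  (forall a b : R, (lebesgue_measure : measure _ R).-integrable `[a, b] (fun x => (w x)%:E)).

Definition wint {R : realType} (w : R -> R) (a b : R) : R :=
  fine (\int[lebesgue_measure]_(x in `]a, b[) (w x)%:E)%E.

Definition conj_exp {R : realType} (p : R) : R := p / (p - 1).

(* Write F, G for primitives of v^q and u^(-p'), and lam, mu for the integrals
   of v^q over (a,b) and of u^(-p') over (b,c) divided by c - a.  A minimum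
   point x of F(y) - lam y on [a,b] satisfies x < b, and every chord of F from
   x to a point of [x,c] has slope at least lam; symmetrically a maximum point
   y of G(y) - mu y on [b,c] satisfies y > b, and every chord of G ending at y
   and starting in [a,y] has slope at least mu.  The hypothesis applied to
   (x,y) controls averages over the end pieces of length (y - x)/t <= y - x,
   which lie in [x,c] and [a,y], so they are at least lam and mu. *)

From HB Require Import structures.
From mathcomp Require Import all_boot all_order all_algebra.
From mathcomp Require Import all_classical all_reals all_analysis.
From mathcomp Require Import lra.
Set Implicit Arguments. Unset Strict Implicit. Unset Printing Implicit Defensive.
Import Order.TTheory GRing.Theory Num.Theory numFieldNormedType.Exports.
Local Open Scope classical_set_scope.
Local Open Scope ring_scope.

Section ChordSlope.
Context {R : realType}.

Lemma within_continuous_sub_linear (A : set R) (F : R -> R) (k : R) :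
  {within A, continuous F} -> {within A, continuous (fun y => F y - k * y)}.
Proof.
move=> cF y; apply: cvgB (cF y) _.
apply: continuous_subspaceT => z.
by apply: cvgM; [exact: cvg_cst | exact: cvg_id].
Qed.

Lemma forward_slope_point (F : R -> R) (a b c k : R) :
  a < b -> b < c -> 0 < k -> {within `[a, b], continuous F} ->
  (forall y, b <= y <= c -> F b <= F y) -> k * (c - a) <= F b - F a ->
  exists2 x, a <= x < b & forall y, x <= y <= c -> k * (y - x) <= F y - F x.
Proof.
move=> ab bc k0 cF Fb slope.
have [x /[!in_itv]/= /andP[ax xb] xmin] :=
  EVT_min (ltW ab) (within_continuous_sub_linear (k := k) cF).
have below_a : F x - k * x <= F a - k * a by apply: xmin; rewrite in_itv /= lexx ltW.
have x_lt_b : x < b.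
  rewrite lt_neqAle xb andbT; apply/eqP => xbE; rewrite xbE in below_a.
  have : k * b < k * c by rewrite ltr_pM2l.
  by rewrite mulrBr in slope; lra.
exists x; first by rewrite ax x_lt_b.
move=> y /andP[xy yc]; rewrite mulrBr.
have [yb | by'] := leP y b.
  by have := xmin y; rewrite in_itv /= yb (le_trans ax xy) => /(_ isT); lra.
have : k * y <= k * c by rewrite ler_pM2l.
have := Fb y; rewrite (ltW by') yc => /(_ isT).
by rewrite mulrBr in slope; lra.
Qed.

Lemma backward_slope_point (G : R -> R) (a b c k : R) :
  a < b -> b < c -> 0 < k -> {within `[b, c], continuous G} ->
  (forall x, a <= x <= b -> G x <= G b) -> k * (c - a) <= G c - G b ->
  exists2 y, b < y <= c & forall x, a <= x <= y -> k * (y - x) <= G y - G x.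
Proof.
move=> ab bc k0 cG Gb slope.
have [y /[!in_itv]/= /andP[by' yc] ymax] :=
  EVT_max (ltW bc) (within_continuous_sub_linear (k := k) cG).
have above_c : G c - k * c <= G y - k * y by apply: ymax; rewrite in_itv /= lexx ltW.
have b_lt_y : b < y.
  rewrite lt_neqAle by' andbT; apply/eqP => byE; rewrite -byE in above_c.
  have : k * a < k * b by rewrite ltr_pM2l.
  by rewrite mulrBr in slope; lra.
exists y; first by rewrite b_lt_y yc.
move=> x /andP[ax xy]; rewrite mulrBr.
have [bx | xb] := leP b x.
  by have := ymax x; rewrite in_itv /= bx (le_trans xy yc) => /(_ isT); lra.
have : k * a <= k * x by rewrite ler_pM2l.
have := Gb x; rewrite ax (ltW xb) => /(_ isT).
by rewrite mulrBr in slope; lra.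
Qed.

End ChordSlope.

Section Primitive.
Context {R : realType}.
Local Notation mu := (@lebesgue_measure R).
Variables (w : R -> R) (a : R).
Hypothesis hw : weight w.

Local Notation W y := (parameterized_integral mu a y w).

Lemma wint_ge0 x y : 0 <= wint w x y.
Proof. by apply: Rintegral_ge0 => z _; case: hw. Qed.

Lemma wint_primitiveE x y : a <= x -> x <= y -> wint w x y = W y - W x.
Proof.
case: hw => _ wi ax xy.
change (\int[mu]_(z in `]x, y[) w z = W y - W x).
rewrite /parameterized_integral (@Rintegral_itvB _ w (BLeft a) (BRight y) x)
  ?bnd_simp ?Rintegral_itv_bndo_bndc //.
by apply: integrableS (wi x y) => //; apply: subset_itv; rewrite bnd_simp.
Qed.

Lemma primitive_continuous x y :
  a <= x -> x <= y -> {within `[x, y], continuous (fun z => W z)}.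
Proof.
case: hw => _ wi ax xy; have ay := le_trans ax xy.
apply: continuous_subspaceW (parameterized_integral_continuous ay (wi a y)).
by apply: subset_itvr; rewrite bnd_simp.
Qed.

Lemma primitive_le x y : a <= x -> x <= y -> W x <= W y.
Proof. by move=> ax xy; rewrite -subr_ge0 -wint_primitiveE ?wint_ge0. Qed.

Lemma wint_div_gt0 x y L : 0 < L -> wint w x y != 0 -> 0 < wint w x y / L.
Proof. by move=> L0 nz; rewrite divr_gt0 // lt_neqAle eq_sym nz wint_ge0. Qed.

Lemma exists_forward_mean_point b c k :
  a < b -> b < c -> 0 < k -> k <= wint w a b / (c - a) ->
  exists2 x, a <= x < b &
    forall s, 0 < s -> x + s <= c -> k <= wint w x (x + s) / s.
Proof.
move=> ab bc k0; rewrite ler_pdivlMr ?subr_gt0 ?(lt_trans ab) // => slope.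
have Wb y : b <= y <= c -> W b <= W y.
  by case/andP => by' _; exact: primitive_le (ltW ab) by'.
rewrite (wint_primitiveE (lexx a) (ltW ab)) in slope.
have [x /andP[ax xb] Wx] := forward_slope_point ab bc k0
  (primitive_continuous (lexx a) (ltW ab)) Wb slope.
exists x; first by rewrite ax.
move=> s s0 xsc; rewrite ler_pdivlMr // wint_primitiveE ?lerDl ?(ltW s0) //.
by have := Wx (x + s); rewrite addrAC subrr add0r lerDl (ltW s0) xsc; apply.
Qed.

Lemma exists_backward_mean_point b c k :
  a < b -> b < c -> 0 < k -> k <= wint w b c / (c - a) ->
  exists2 y, b < y <= c &
    forall s, 0 < s -> a <= y - s -> k <= wint w (y - s) y / s.
Proof.
move=> ab bc k0; rewrite ler_pdivlMr ?subr_gt0 ?(lt_trans ab) // => slope.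
have Wb x : a <= x <= b -> W x <= W b.
  by case/andP => ax xb; exact: primitive_le ax xb.
rewrite (wint_primitiveE (ltW ab) (ltW bc)) in slope.
have [y /andP[by' yc] Wy] := backward_slope_point ab bc k0
  (primitive_continuous (ltW ab) (ltW bc)) Wb slope.
exists y; first by rewrite by' yc.
move=> s s0 ays; rewrite ler_pdivlMr // wint_primitiveE ?gerBl ?(ltW s0) //.
by have := Wy (y - s); rewrite subKr gerBl (ltW s0) ays; apply.
Qed.

End Primitive.

Lemma pdivr_le {R : realFieldType} (d t : R) : 0 < d -> 1 <= t -> 0 < d / t <= d.
Proof.
move=> d0 t1; have t0 := lt_le_trans ltr01 t1.
by rewrite divr_gt0 // ler_pdivrMr //; apply: ler_peMr; rewrite // ltW.
Qed.

Lemma ler_pM_powR {R : realType} (e1 e2 x1 x2 y1 y2 : R) :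
  0 <= e1 -> 0 <= e2 -> 0 <= x1 <= y1 -> 0 <= x2 <= y2 ->
  x1 `^ e1 * x2 `^ e2 <= y1 `^ e1 * y2 `^ e2.
Proof.
move=> e10 e20 /andP[x10 xy1] /andP[x20 xy2].
by apply: ler_pM; rewrite ?powR_ge0 // ge0_ler_powR ?nnegrE
  ?(le_trans x10 xy1) ?(le_trans x20 xy2).
Qed.

Theorem lemma2p6 (R : realType) (p q t K : R) (u v : R -> R) :
  1 < p -> 1 < q -> 2 < t ->
  weight u -> weight v ->
  weight (fun x => v x `^ q) ->
  {ae lebesgue_measure, forall x, 0 < u x} ->
  weight (fun x => u x `^ (- conj_exp p)) ->
  (forall a b : R, a < b ->
     let l := b - a in
     (wint (fun x => v x `^ q) a (a + l / t) / (l / t)) `^ (q^-1) *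
     (wint (fun x => u x `^ (- conj_exp p)) (b - l / t) b / (l / t))
        `^ ((conj_exp p)^-1) <= K) ->
  forall a b c : R, a < b -> b < c ->
    (wint (fun x => v x `^ q) a b / (c - a)) `^ (q^-1) *
    (wint (fun x => u x `^ (- conj_exp p)) b c / (c - a)) `^ ((conj_exp p)^-1)
      <= K.
Proof.
move=> p1 q1 t2 _ _ wf _ wg hyp a b c ab bc.
set f := fun x => v x `^ q in wf hyp *; set g := fun x => u x `^ _ in wg hyp *.
have e1 : 0 < q^-1 by rewrite invr_gt0 (lt_trans ltr01).
have e2 : 0 < (conj_exp p)^-1.
  by rewrite invr_gt0 divr_gt0 ?subr_gt0 ?(lt_trans ltr01).
have K0 : 0 <= K by apply: le_trans (hyp 0 1 ltr01); rewrite mulr_ge0 ?powR_ge0.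
have ca : 0 < c - a by rewrite subr_gt0 (lt_trans ab).
have [-> | /(wint_div_gt0 wf ca) lam0] := eqVneq (wint f a b) 0.
  by rewrite mul0r powR0 ?gt_eqF ?mul0r.
have [-> | /(wint_div_gt0 wg ca) mu0] := eqVneq (wint g b c) 0.
  by rewrite mul0r (@powR0 _ (conj_exp p)^-1) ?gt_eqF ?mulr0.
have [x /andP[ax xb] Fx] := exists_forward_mean_point wf ab bc lam0 (lexx _).
have [y /andP[by' yc] Gy] := exists_backward_mean_point wg ab bc mu0 (lexx _).
have xy : 0 < y - x by rewrite subr_gt0 (lt_trans xb).
have /andP[s0 sxy] := pdivr_le xy (le_trans (ler1n R 2) (ltW t2)).
apply: le_trans (hyp x y _); last by rewrite -subr_gt0.
move: s0 sxy; set s := (y - x) / t => s0 sxy; clearbody s.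
apply: ler_pM_powR; rewrite ?(ltW e1) ?(ltW e2) ?(ltW lam0) ?(ltW mu0) //=.
  by rewrite Fx // (le_trans _ yc) // addrC -lerBrDr.
by rewrite Gy // (le_trans ax) // lerBrDr addrC -lerBrDr.
Qed.
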